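(* Let $d, K \ge 1$ be integers, $\lambda>0$, $\epsilon>0$, and let $a^*\in[K]=\{1,\dots,K\}$ be a target arm. For each arm $a\in[K]$ let $X_a\in\mathbb{R}^{m_a\times d}$ (historical contexts), $y_a\in\mathbb{R}^{m_a}$ (historical rewards), $V_a=X_a^\top X_a+\lambda I$, and let $\alpha_a\in\mathbb{R}$ be a fixed number (not depending on the rewards or their modification). For $x\in\mathbb{R}^d$ write $\|x\|_{V_a^{-1}}=\sqrt{x^\top V_a^{-1}x}$. Say that $x$ can be $\epsilon$-strongly attacked into pulling $a^*$ if there exist vectors $\Delta_a\in\mathbb{R}^{m_a}$, $a\in[K]$, such that, with $\hat\theta_a=V_a^{-1}X_a^\top(y_a+\Delta_a)$, $$x^\top\hat\theta_{a^*}+\alpha_{a^*}\|x\|_{V_{a^*}^{-1}}\ \ge\ \epsilon+x^\top\hat\theta_a+\alpha_a\|x\|_{V_a^{-1}}\quad\text{for all } a\neq a^*.$$ Then a context $x\in\mathbb{R}^d$ cannot be $\epsilon$-strongly attacked into pulling $a^*$ if and only if there exists $a\neq a^*$ such that both (i) $x\in\operatorname{Null}(X_{a^*})\cap\operatorname{Null}(X_a)$ and (ii) $\alpha_{a^*}\|x\|_{V_{a^*}^{-1}}<\epsilon+\alpha_a\|x\|_{V_a^{-1}}$ hold.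
   Context: This is the setting of a linear contextual bandit with UCB-type arm selection: after ridge regression on (possibly modified) historical rewards, the algorithm picks for context $x$ the arm maximizing $x^\top\hat\theta_a+\alpha_a\|x\|_{V_a^{-1}}$. An attacker may replace each reward vector $y_a$ by $y_a+\Delta_a$ with arbitrary real $\Delta_a$; the contexts $X_a$ and the exploration parameters $\alpha_a$ are unaffected. $\operatorname{Null}(M)$ denotes the null space $\{x: Mx=0\}$. *)

From mathcomp Require Import all_boot all_order all_algebra.
Set Implicit Arguments. Unset Strict Implicit. Unset Printing Implicit Defensive.
Import Order.TTheory GRing.Theory Num.Theory.
Local Open Scope ring_scope.

Definition Vmat (R : rcfType) (m d : nat) (X : 'M[R]_(m, d)) (lambda : R)
  : 'M[R]_d := X^T *m X + lambda%:M.

Definition wnorm (R : rcfType) (d : nat) (V : 'M[R]_d) (x : 'cV[R]_d) : R :=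
  Num.sqrt ((x^T *m invmx V *m x) 0 0).

Definition theta_hat (R : rcfType) (m d : nat) (X : 'M[R]_(m, d)) (lambda : R)
  (y' : 'cV[R]_m) : 'cV[R]_d := invmx (Vmat X lambda) *m (X^T *m y').

Definition ucb (R : rcfType) (m d : nat) (X : 'M[R]_(m, d)) (lambda alpha : R)
  (y' : 'cV[R]_m) (x : 'cV[R]_d) : R :=
  (x^T *m theta_hat X lambda y') 0 0 + alpha * wnorm (Vmat X lambda) x.

Definition strongly_attackable (R : rcfType) (d K : nat) (m : 'I_K -> nat)
  (X : forall a : 'I_K, 'M[R]_(m a, d)) (y : forall a : 'I_K, 'cV[R]_(m a))
  (alpha : 'I_K -> R) (lambda eps : R) (astar : 'I_K) (x : 'cV[R]_d) : Prop :=
  exists Delta : forall a : 'I_K, 'cV[R]_(m a),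
    forall a : 'I_K, a != astar ->
      ucb (X astar) lambda (alpha astar) (y astar + Delta astar) x >=
      eps + ucb (X a) lambda (alpha a) (y a + Delta a) x.

From mathcomp Require Import all_boot all_order all_algebra.
From mathcomp Require Import lra.
Import Order.TTheory GRing.Theory Num.Theory.
Set Implicit Arguments. Unset Strict Implicit. Unset Printing Implicit Defensive.
Local Open Scope ring_scope.

(* The index x^T theta_a = r_a (y_a + Delta_a) is affine in Delta_a with slope
   r_a = x^T V_a^-1 X_a^T, and r_a = 0 exactly when X_a x = 0.  So an arm whose
   contexts do not annihilate x can be given any index, while an arm with
   X_a x = 0 keeps the fixed index alpha_a ||x||_{V_a^-1}.  An attack therefore
   exists unless a* and some other arm are both frozen with the wrong order. *)

Section SumOfSquares.
Variable R : realDomainType.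

Lemma mulmx_tr_ge0 n (u : 'rV[R]_n) : 0 <= (u *m u^T) 0 0.
Proof. by rewrite mxE; apply: sumr_ge0 => j _; rewrite mxE -expr2 sqr_ge0. Qed.

Lemma mulmx_tr_eq0 n (u : 'rV[R]_n) : ((u *m u^T) 0 0 == 0) = (u == 0).
Proof.
apply/eqP/eqP => [|->]; last by rewrite mul0mx mxE.
have sq_ge0 i : true -> 0 <= u 0 i * u^T i 0 by rewrite mxE -expr2 sqr_ge0.
rewrite mxE => /(psumr_eq0P sq_ge0) u0; apply/rowP => j; rewrite mxE.
by have /eqP := u0 j isT; rewrite mxE mulf_eq0 orbb => /eqP.
Qed.

End SumOfSquares.

Section RidgeUCB.
Variables (R : rcfType) (m d : nat) (X : 'M[R]_(m, d)).

Lemma Vmat_tr lambda : (Vmat X lambda)^T = Vmat X lambda.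
Proof. by rewrite /Vmat linearD /= trmx_mul trmxK tr_scalar_mx. Qed.

Lemma Vmat_form lambda (v : 'rV[R]_d) :
  (v *m Vmat X lambda *m v^T) 0 0
    = ((v *m X^T) *m (v *m X^T)^T) 0 0 + lambda * (v *m v^T) 0 0.
Proof.
rewrite /Vmat mulmxDr mulmxDl trmx_mul trmxK !mulmxA mul_mx_scalar.
by rewrite -scalemxAl !mxE.
Qed.

Lemma Vmat_null lambda (z : 'cV[R]_d) :
  X *m z = 0 -> Vmat X lambda *m z = lambda *: z.
Proof. by move=> Xz0; rewrite /Vmat mulmxDl -mulmxA Xz0 mulmx0 add0r mul_scalar_mx. Qed.

Definition ridge_weights lambda (x : 'cV[R]_d) : 'rV[R]_m :=
  x^T *m invmx (Vmat X lambda) *m X^T.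

Lemma ucbE lambda alpha (y' : 'cV[R]_m) (x : 'cV[R]_d) :
  ucb X lambda alpha y' x
    = (ridge_weights lambda x *m y') 0 0 + alpha * wnorm (Vmat X lambda) x.
Proof. by rewrite /ucb /theta_hat /ridge_weights !mulmxA. Qed.

Variables (lambda : R) (alpha : R).
Hypothesis lambda_gt0 : 0 < lambda.

Lemma Vmat_unit : Vmat X lambda \in unitmx.
Proof.
rewrite -row_free_unit; apply: inj_row_free => v vV0.
have := Vmat_form lambda v; rewrite vV0 mul0mx mxE => /esym form0.
apply/eqP; rewrite -mulmx_tr_eq0 eq_le mulmx_tr_ge0 andbT.
rewrite -(pmulr_rle0 _ lambda_gt0) -form0 lerDr.
exact: mulmx_tr_ge0.
Qed.

Lemma ridge_weights_eq0 (x : 'cV[R]_d) :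
  (ridge_weights lambda x == 0) = (X *m x == 0).
Proof.
have wT : (ridge_weights lambda x)^T = X *m (invmx (Vmat X lambda) *m x).
  by rewrite /ridge_weights !trmx_mul !trmxK trmx_inv Vmat_tr.
rewrite -trmx_eq0 wT; apply/eqP/eqP => [Xz0|Xx0].
- rewrite -(mulKVmx Vmat_unit x) Vmat_null // -scalemxAr Xz0.
  exact: scaler0.
- have Vx : Vmat X lambda *m x = lambda *: x by exact: Vmat_null.
  have -> : invmx (Vmat X lambda) *m x = lambda^-1 *: x.
    rewrite -{1}[x](scalerK (lt0r_neq0 lambda_gt0)) -scalemxAr -Vx.
    by rewrite mulKmx ?Vmat_unit.
  by rewrite -scalemxAr Xx0 scaler0.
Qed.

Lemma ucb_null (y' : 'cV[R]_m) (x : 'cV[R]_d) :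
  X *m x = 0 -> ucb X lambda alpha y' x = alpha * wnorm (Vmat X lambda) x.
Proof.
move/eqP; rewrite -ridge_weights_eq0 => /eqP w0.
by rewrite ucbE w0 mul0mx mxE add0r.
Qed.

(* When [X *m x = 0] the ridge weights vanish: the division is by [0] and the
   shift is [0]. *)
Definition shift_to (y : 'cV[R]_m) (x : 'cV[R]_d) (t : R) : 'cV[R]_m :=
  let r := ridge_weights lambda x in
  ((t - ucb X lambda alpha y x) / (r *m r^T) 0 0) *: r^T.

Lemma ucb_shift_to (y : 'cV[R]_m) (x : 'cV[R]_d) (t : R) :
  ucb X lambda alpha (y + shift_to y x t) x
    = if X *m x == 0 then alpha * wnorm (Vmat X lambda) x else t.
Proof.
case: ifPn => [/eqP|]; first exact: ucb_null.
rewrite -ridge_weights_eq0 -mulmx_tr_eq0 => rr_neq0.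
rewrite ucbE mulmxDr -scalemxAr.
set fit := _ *m y; set shift := _ *: _.
rewrite [(fit + shift) 0 0]mxE [shift 0 0]mxE divfK // addrAC /fit -ucbE.
by rewrite addrC subrK.
Qed.

End RidgeUCB.

Theorem theorem1 (R : rcfType) (d K : nat) (m : 'I_K -> nat)
  (X : forall a : 'I_K, 'M[R]_(m a, d)) (y : forall a : 'I_K, 'cV[R]_(m a))
  (alpha : 'I_K -> R) (lambda eps : R) (astar : 'I_K) (x : 'cV[R]_d) :
  (1 <= d)%N -> 0 < lambda -> 0 < eps ->
  ~ strongly_attackable X y alpha lambda eps astar x <->
  exists2 a : 'I_K, a != astar &
    [/\ X astar *m x = 0, X a *m x = 0 &
        alpha astar * wnorm (Vmat (X astar) lambda) x
          < eps + alpha a * wnorm (Vmat (X a) lambda) x].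
Proof.
move=> _ lambda_gt0 eps_gt0.
pose W a := alpha a * wnorm (Vmat (X a) lambda) x.
split=> [not_attackable|[a a_neq [Xs0 Xa0 W_lt]] [Delta attack]]; last first.
  by have := attack a a_neq; rewrite !ucb_null // leNgt W_lt.
have [/existsP[a /and4P[a_neq /eqP Xs0 /eqP Xa0 W_lt]]|] :=
  boolP [exists a, [&& a != astar, X astar *m x == 0, X a *m x == 0
                     & W astar < eps + W a]]; first by exists a.
rewrite negb_exists => /forallP no_witness; case: not_attackable.
pose S : R := \sum_b `|W b|.
have W_bound b : - S <= W b <= S.
  rewrite -ler_norml /S (bigD1 b) //= lerDl.
  by apply: sumr_ge0 => i _; apply: normr_ge0.
(* [S] dominates every frozen index, so these targets order all arms. *)
pose target a := if a == astar then eps + S else - S - eps.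
exists (fun a => shift_to (X a) lambda (alpha a) (y a) x (target a)).
move=> a a_neq; rewrite !ucb_shift_to // /target eqxx (negbTE a_neq).
have := no_witness a; rewrite a_neq /= -/(W a) -/(W astar).
have /andP[? ?] := W_bound a; have /andP[? ?] := W_bound astar.
by case: eqP; case: eqP => //= _ _; rewrite ?leNgt; lra.
Qed.
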